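(* Let $T:\mathbb N\to\mathbb N$ satisfy $T(n)\ge n$. If every $f\in\mathbf{FPC}$ satisfies $\mathrm{sz}(f(\tilde v))=O(T(\mathrm{sz}(\tilde v)))$, then $\mathbf{FPC}=\mathbf{FPC}[T]$.
   Context: CorePolyC. Types are $\mathtt{iint},\mathtt{int},\mathtt{bool}$; $\mathsf{Int}=\{\mathtt{iint},\mathtt{int}\}$, ordered by $\mathtt{iint}\preccurlyeq\mathtt{int}$. Values are unbounded integers ($\mathbb Z$) and booleans $\#t,\#f$. Expressions: variables $x$; constants (nonempty decimal digit strings denoting natural numbers; $\mathtt{true}$, $\mathtt{false}$); operator applications $\mathtt{op}(e_1,\dots,e_m)$; parenthesized $(e)$. Operators and semantics: unary $-$ (negation); binary $+,-,/,\%$ (integer addition, subtraction, division, remainder, with division and remainder by $0$ returning $0$); $\mathtt{size}$, with $\mathtt{size}(v)=\lceil\log_2(\mathrm{abs}(v)+1)\rceil$; comparisons $\texttt{>=},\texttt{<=},\texttt{>},\texttt{<},\texttt{==},\texttt{!=}$ on integers returning booleans; boolean $\texttt{!},\texttt{\&\&},\texttt{||}$. Statements: declaration $t\ x;$; assignment $x=e;$; block $\{s_1\dots s_m\}$; conditional $\mathbf{if}(e)\ s_1\ \mathbf{else}\ s_2$; loop $\mathbf{for}(x<\mathtt{size}(e))\ s$ (loop bounds are always syntactically of the form $\mathtt{size}(e)$). A program is $\mathbf{int\ main}(\mathbf{int}\ x_1,\dots,\mathbf{int}\ x_m)\{s_1\dots s_k\ \mathbf{return}\ e;\}$. Semantics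 (big-step). A store $\Sigma$ is a finite partial map from variables to values; $\Sigma[x\mapsto v]$ is the update. $\Sigma\vdash e\Downarrow v$: a variable $x\in\mathrm{dom}\,\Sigma$ evaluates to $\Sigma(x)$, constants to their value, $\mathtt{op}(e_1,\dots,e_m)$ to $\mathtt{op}$ applied to the values of the $e_i$. $\Sigma\vdash s\Downarrow\Sigma'$: $t\ x;$ gives $\Sigma[x\mapsto 0]$ if $t\in\mathsf{Int}$ and $\Sigma[x\mapsto\#f]$ if $t=\mathtt{bool}$; $x=e;$ (with $x\in\mathrm{dom}\,\Sigma$) gives $\Sigma[x\mapsto v]$ where $\Sigma\vdash e\Downarrow v$; a sequence or block executes its statements in order threading the store (a block returns the final store); a conditional evaluates its guard to a boolean and executes the corresponding branch; $\mathbf{for}(x<e)\ s$ evaluates $e$ once to an integer $i$, sets $\Sigma_0=\Sigma$, executes $s$ from $\Sigma_j[x\mapsto j]$ obtaining $\Sigma_{j+1}$ for $j=0,\dots,i-1$, and ends in $\Sigma_i$ (i.e. in $\Sigma$ if $i\le 0$). A program on inputs $v_1,\dots,v_m$ runs its statements from the store $[x_1\mapsto v_1,\dots,x_m\mapsto v_m]$ and outputs the value of its return expression in the resulting store. Type system. A typing environment $\Gamma$ is a finite partial map from variables to types; $\ell\in\{\#t,\#f\}$ is the loop indicator. Expression typing $\Gamma,\ell\vdash e:t$: a variable $x\in\mathrm{dom}\,\Gamma$ has type $\Gamma(x)$; digit literals have type $\mathtt{iint}$, $\mathtt{true},\mathtt{false}$ have type $\mathtt{bool}$; $\texttt{!},\texttt{\&\&},\texttt{||}$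 take $\mathtt{bool}$ arguments to $\mathtt{bool}$; comparisons take arguments with types in $\mathsf{Int}$ to $\mathtt{bool}$; $+,-,/,\%$ take arguments with types in $\mathsf{Int}$ to their supremum under $\preccurlyeq$ ($\mathtt{iint}$ iff all arguments are $\mathtt{iint}$); $\mathtt{size}$ takes only an $\mathtt{iint}$ argument, giving $\mathtt{iint}$; parentheses preserve types. Statement typing $\Gamma,\ell\vdash s:\Gamma'$: $t\ x;$ is typable iff $x\notin\mathrm{dom}\,\Gamma$ and not($\ell=\#t$ and $t=\mathtt{iint}$), giving $\Gamma[x\mapsto t]$; $x=e;$ is typable iff $x\in\mathrm{dom}\,\Gamma$, not($\ell=\#t$ and $\Gamma(x)=\mathtt{iint}$), and $\Gamma,\ell\vdash e:t$ with $t,\Gamma(x)$ both in $\mathsf{Int}$ or both $\mathtt{bool}$, giving $\Gamma$; a sequence $s_1\dots s_m$ threads $\Gamma_0=\Gamma$, $\Gamma_{i-1},\ell\vdash s_i:\Gamma_i$, giving $\Gamma_m$; a block $\{\tilde s\}$ is typable if its sequence is, giving $\Gamma$; a conditional needs a guard of type $\mathtt{bool}$ and both branches typable under $\Gamma,\ell$, giving $\Gamma$; $\mathbf{for}(x<e)\ s$ needs $\Gamma,\ell\vdash e:\mathtt{iint}$, $x\notin\mathrm{dom}\,\Gamma$, and $\Gamma[x\mapsto\mathtt{iint}],\#t\vdash s:\Gamma'$ for some $\Gamma'$, giving $\Gamma$. A program is well-typed if its statements are typable starting from $[x_1\mapsto\mathtt{int},\dots,x_m\mapsto\mathtt{int}]$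 with $\ell=\#f$, ending in some $\Gamma'$, and its return expression has a type in $\mathsf{Int}$ under $\Gamma',\#f$. A well-typed program $p$ with $m$ inputs computes a total function $[\![p]\!]:\mathbb Z^m\to\mathbb Z$; $\mathbf{FPC}$ is the set of all such functions. Sizes: $\mathrm{sz}(v)=\lceil\log_2(\mathrm{abs}(v)+1)\rceil$ for $v\in\mathbb Z$, $\mathrm{sz}(\#t)=\mathrm{sz}(\#f)=1$, $\mathrm{sz}(v_1,\dots,v_m)=\sum_i\mathrm{sz}(v_i)$. Instruction count (cost semantics) $\mathrm{ic}$: a variable or constant costs $1$; a parenthesized expression costs $1$ plus its content; $\mathtt{op}(e_1,\dots,e_m)$ costs $1$ plus the costs of the $e_i$; a declaration costs $1$; an assignment costs $1$ plus the cost of its expression; a block costs $1$ plus the cost of its sequence; a sequence costs the sum of its statements' costs; a conditional costs the guard's cost plus the cost of the executed branch; a loop costs the cost of evaluating its bound plus the sum of the costs of all executed iterations of its body; a program costs its statements' cost plus the cost of its return expression. $\mathrm{ic}(p,\tilde v)$ is the cost of running $p$ on $\tilde v$. $\mathbf{FPC}[T]$ is the set of $f\in\mathbf{FPC}$ computed by some well-typed program $p$ with $\mathrm{ic}(p,\tilde v)=O(T(\mathrm{sz}(\tilde v)))$. *)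

From Stdlib Require Import ZArith List Bool Arith.
Import ListNotations.
Open Scope Z_scope.

Inductive ty : Type := TIint | TInt | TBool.

Definition var := nat.

Inductive unop : Type := ONeg | OSize | ONot.
Inductive binop : Type :=
  OAdd | OSub | ODiv | OMod | OGe | OLe | OGt | OLt | OEq | ONe | OAnd | OOr.

Inductive expr : Type :=
| EVar (x : var)
| ENum (n : nat)            (* decimal digit string denoting the natural n *)
| ETrue | EFalse
| EUn (o : unop) (e : expr)
| EBin (o : binop) (e1 e2 : expr)
| EParen (e : expr).

(* SFor x e s  is   for (x < size(e)) s *)
Inductive stmt : Type :=
| SDecl (t : ty) (x : var)
| SAssign (x : var) (e : expr)
| SBlock (ss : list stmt)
| SIf (e : expr) (s1 s2 : stmt)
| SFor (x : var) (e : expr) (s : stmt).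

Record prog : Type := Prog { params : list var; body : list stmt; ret : expr }.

Inductive val : Type := VInt (z : Z) | VBool (b : bool).

Definition store := var -> option val.
Definition empty_store : store := fun _ => None.
Definition upd (S : store) (x : var) (v : val) : store :=
  fun y => if Nat.eqb y x then Some v else S y.

Definition sizeZ (z : Z) : Z := Z.log2_up (Z.abs z + 1).

(* division / remainder, returning 0 on divisor 0 (C-style truncation) *)
Definition divZ (a b : Z) : Z := if b =? 0 then 0 else Z.quot a b.
Definition modZ (a b : Z) : Z := if b =? 0 then 0 else Z.rem a b.

Definition eval_un (o : unop) (v : val) : option val :=
  match o, v with
  | ONeg, VInt z => Some (VInt (- z))
  | OSize, VInt z => Some (VInt (sizeZ z))
  | ONot, VBool b => Some (VBool (negb b))
  | _, _ => None
  end.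

Definition eval_bin (o : binop) (v1 v2 : val) : option val :=
  match o, v1, v2 with
  | OAdd, VInt a, VInt b => Some (VInt (a + b))
  | OSub, VInt a, VInt b => Some (VInt (a - b))
  | ODiv, VInt a, VInt b => Some (VInt (divZ a b))
  | OMod, VInt a, VInt b => Some (VInt (modZ a b))
  | OGe, VInt a, VInt b => Some (VBool (b <=? a))
  | OLe, VInt a, VInt b => Some (VBool (a <=? b))
  | OGt, VInt a, VInt b => Some (VBool (b <? a))
  | OLt, VInt a, VInt b => Some (VBool (a <? b))
  | OEq, VInt a, VInt b => Some (VBool (a =? b))
  | ONe, VInt a, VInt b => Some (VBool (negb (a =? b)))
  | OAnd, VBool a, VBool b => Some (VBool (a && b))
  | OOr, VBool a, VBool b => Some (VBool (a || b))
  | _, _, _ => None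
  end.

Fixpoint eval (S : store) (e : expr) : option val :=
  match e with
  | EVar x => S x
  | ENum n => Some (VInt (Z.of_nat n))
  | ETrue => Some (VBool true)
  | EFalse => Some (VBool false)
  | EUn o e1 => match eval S e1 with Some v => eval_un o v | None => None end
  | EBin o e1 e2 =>
      match eval S e1, eval S e2 with
      | Some v1, Some v2 => eval_bin o v1 v2
      | _, _ => None
      end
  | EParen e1 => eval S e1
  end.

Fixpoint cost_e (e : expr) : nat :=
  match e with
  | EVar _ | ENum _ | ETrue | EFalse => 1%nat
  | EUn _ e1 => S (cost_e e1)
  | EBin _ e1 e2 => S (cost_e e1 + cost_e e2)
  | EParen e1 => S (cost_e e1)
  end.

Definition default_val (t : ty) : val :=
  match t with TBool => VBool false | _ => VInt 0 end.

(* statements: exec S s S' c  means  S |- s ⇓ S'  with instruction count c *)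
Inductive exec : store -> stmt -> store -> nat -> Prop :=
| E_Decl S t x : exec S (SDecl t x) (upd S x (default_val t)) 1
| E_Assign S x e v :
    S x <> None -> eval S e = Some v ->
    exec S (SAssign x e) (upd S x v) (1 + cost_e e)
| E_Block S ss S' c :
    execs S ss S' c -> exec S (SBlock ss) S' (1 + c)
| E_IfT S e s1 s2 S' c :
    eval S e = Some (VBool true) -> exec S s1 S' c ->
    exec S (SIf e s1 s2) S' (cost_e e + c)
| E_IfF S e s1 s2 S' c :
    eval S e = Some (VBool false) -> exec S s2 S' c ->
    exec S (SIf e s1 s2) S' (cost_e e + c)
| E_For S x e s i S' c :
    eval S (EUn OSize e) = Some (VInt i) ->
    loop S x s 0 i S' c ->
    exec S (SFor x e s) S' (cost_e (EUn OSize e) + c)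
with execs : store -> list stmt -> store -> nat -> Prop :=
| Es_nil S : execs S [] S 0
| Es_cons S s ss S1 S2 c1 c2 :
    exec S s S1 c1 -> execs S1 ss S2 c2 -> execs S (s :: ss) S2 (c1 + c2)
(* loop S x s j i S' c : iterations j, ..., i-1 starting from store S *)
with loop : store -> var -> stmt -> Z -> Z -> store -> nat -> Prop :=
| L_done S x s j i : i <= j -> loop S x s j i S 0
| L_step S x s j i S1 S2 c1 c2 :
    j < i -> exec (upd S x (VInt j)) s S1 c1 ->
    loop S1 x s (j + 1) i S2 c2 -> loop S x s j i S2 (c1 + c2).

Definition init_store (xs : list var) (vs : list Z) : store :=
  fold_left (fun S (p : var * Z) => upd S (fst p) (VInt (snd p)))
            (combine xs vs) empty_store.

Definition run (p : prog) (vs : list Z) (out : Z) (c : nat) : Prop :=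
  length vs = length (params p) /\
  exists S' c1, execs (init_store (params p) vs) (body p) S' c1 /\
    eval S' (ret p) = Some (VInt out) /\ c = (c1 + cost_e (ret p))%nat.

Definition tenv := var -> option ty.
Definition tupd (G : tenv) (x : var) (t : ty) : tenv :=
  fun y => if Nat.eqb y x then Some t else G y.

Definition is_int (t : ty) : bool :=
  match t with TIint | TInt => true | TBool => false end.
Definition sup (t1 t2 : ty) : ty :=
  match t1, t2 with TIint, TIint => TIint | _, _ => TInt end.
Definition is_arith (o : binop) : bool :=
  match o with OAdd | OSub | ODiv | OMod => true | _ => false end.
Definition is_cmp (o : binop) : bool :=
  match o with OGe | OLe | OGt | OLt | OEq | ONe => true | _ => false end.
Definition is_logic (o : binop) : bool :=
  match o with OAnd | OOr => true | _ => false end.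
Definition compat (t tx : ty) : bool :=
  (is_int t && is_int tx) ||
  match t, tx with TBool, TBool => true | _, _ => false end.

Inductive typ_e (G : tenv) (l : bool) : expr -> ty -> Prop :=
| T_Var x t : G x = Some t -> typ_e G l (EVar x) t
| T_Num n : typ_e G l (ENum n) TIint
| T_True : typ_e G l ETrue TBool
| T_False : typ_e G l EFalse TBool
| T_Neg e t : typ_e G l e t -> is_int t = true -> typ_e G l (EUn ONeg e) t
| T_Size e : typ_e G l e TIint -> typ_e G l (EUn OSize e) TIint
| T_Not e : typ_e G l e TBool -> typ_e G l (EUn ONot e) TBool
| T_Arith o e1 e2 t1 t2 :
    is_arith o = true -> typ_e G l e1 t1 -> typ_e G l e2 t2 ->
    is_int t1 = true -> is_int t2 = true -> typ_e G l (EBin o e1 e2) (sup t1 t2)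
| T_Cmp o e1 e2 t1 t2 :
    is_cmp o = true -> typ_e G l e1 t1 -> typ_e G l e2 t2 ->
    is_int t1 = true -> is_int t2 = true -> typ_e G l (EBin o e1 e2) TBool
| T_Logic o e1 e2 :
    is_logic o = true -> typ_e G l e1 TBool -> typ_e G l e2 TBool ->
    typ_e G l (EBin o e1 e2) TBool
| T_Paren e t : typ_e G l e t -> typ_e G l (EParen e) t.

Inductive typ_s : tenv -> bool -> stmt -> tenv -> Prop :=
| TS_Decl G l t x :
    G x = None -> ~ (l = true /\ t = TIint) ->
    typ_s G l (SDecl t x) (tupd G x t)
| TS_Assign G l x e tx t :
    G x = Some tx -> ~ (l = true /\ tx = TIint) ->
    typ_e G l e t -> compat t tx = true ->
    typ_s G l (SAssign x e) G
| TS_Block G l ss G' : typ_ss G l ss G' -> typ_s G l (SBlock ss) G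
| TS_If G l e s1 s2 G1 G2 :
    typ_e G l e TBool -> typ_s G l s1 G1 -> typ_s G l s2 G2 ->
    typ_s G l (SIf e s1 s2) G
| TS_For G l x e s G' :
    typ_e G l (EUn OSize e) TIint -> G x = None ->
    typ_s (tupd G x TIint) true s G' ->
    typ_s G l (SFor x e s) G
with typ_ss : tenv -> bool -> list stmt -> tenv -> Prop :=
| TSs_nil G l : typ_ss G l [] G
| TSs_cons G l s ss G1 G2 :
    typ_s G l s G1 -> typ_ss G1 l ss G2 -> typ_ss G l (s :: ss) G2.

Definition init_tenv (xs : list var) : tenv :=
  fold_left (fun G x => tupd G x TInt) xs (fun _ => None).

Definition well_typed (p : prog) : Prop :=
  exists G' t, typ_ss (init_tenv (params p)) false (body p) G' /\
    typ_e G' false (ret p) t /\ is_int t = true.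

(* p (with m inputs) computes f : Z^m -> Z (represented on lists of length m) *)
Definition computes (p : prog) (m : nat) (f : list Z -> Z) : Prop :=
  length (params p) = m /\
  forall vs, length vs = m -> exists c, run p vs (f vs) c.

Definition FPC (m : nat) (f : list Z -> Z) : Prop :=
  exists p, well_typed p /\ computes p m f.

Definition sz (z : Z) : nat := Z.to_nat (sizeZ z).
Definition sz_vec (vs : list Z) : nat := fold_right (fun z a => (sz z + a)%nat) 0%nat vs.

Definition FPCT (T : nat -> nat) (m : nat) (f : list Z -> Z) : Prop :=
  exists p, well_typed p /\ computes p m f /\
    exists C n0, forall vs out c, length vs = m -> (n0 <= sz_vec vs)%nat ->
      run p vs out c -> (c <= C * T (sz_vec vs))%nat.

From Stdlib Require Import ZArith List Lia ClassicalEpsilon.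
Import ListNotations.

(* Instrument a program p with a fresh variable y of type int, set to 1 and
   doubled (y = y + y) once for each unit of instruction count that p spends;
   doubling an int is allowed even inside loops.  The instrumented program is
   well typed and returns 2^ic(p,v), so it computes a function of FPC, whose
   output size is at least ic(p,v).  The hypothesis bounds that size by
   O(T(sz v)), hence ic(p,v) = O(T(sz v)). *)

Definition double (y : var) : stmt := SAssign y (EBin OAdd (EVar y) (EVar y)).
Definition doubles (y : var) (k : nat) : list stmt := repeat (double y) k.

Fixpoint instrument (y : var) (s : stmt) : list stmt :=
  match s with
  | SDecl t x => SDecl t x :: doubles y 1
  | SAssign x e => SAssign x e :: doubles y (1 + cost_e e)
  | SBlock ss => SBlock (concat (map (instrument y) ss)) :: doubles y 1
  | SIf e s1 s2 => [SIf e (SBlock (instrument y s1 ++ doubles y (cost_e e)))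
                          (SBlock (instrument y s2 ++ doubles y (cost_e e)))]
  | SFor x e s1 =>
      doubles y (cost_e (EUn OSize e)) ++ [SFor x e (SBlock (instrument y s1))]
  end.

Definition instrument_list (y : var) (ss : list stmt) : list stmt :=
  concat (map (instrument y) ss).

Fixpoint max_var_e (e : expr) : nat :=
  match e with
  | EVar x => x
  | ENum _ | ETrue | EFalse => 0
  | EUn _ e1 | EParen e1 => max_var_e e1
  | EBin _ e1 e2 => Nat.max (max_var_e e1) (max_var_e e2)
  end.

Fixpoint max_var_s (s : stmt) : nat :=
  match s with
  | SDecl _ x => x
  | SAssign x e => Nat.max x (max_var_e e)
  | SBlock ss => list_max (map max_var_s ss)
  | SIf e s1 s2 => Nat.max (max_var_e e) (Nat.max (max_var_s s1) (max_var_s s2))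
  | SFor x e s1 => Nat.max x (Nat.max (max_var_e e) (max_var_s s1))
  end.

Definition max_var_list (ss : list stmt) : nat := list_max (map max_var_s ss).

Definition pow2 (c : nat) : Z := 2 ^ Z.of_nat c.

Lemma mul_pow2_add z a b : (z * pow2 a * pow2 b = z * pow2 (a + b))%Z.
Proof. unfold pow2; rewrite Nat2Z.inj_add, Z.pow_add_r; lia. Qed.

Lemma mul_pow2_0 z : (z * pow2 0 = z)%Z.
Proof. apply Z.mul_1_r. Qed.

Definition agree_off {A : Type} (y : var) (f g : var -> option A) : Prop :=
  forall x, x <> y -> f x = g x.

Lemma agree_off_trans {A} y (f g h : var -> option A) :
  agree_off y f g -> agree_off y g h -> agree_off y f h.
Proof. intros H1 H2 x Hx; rewrite H1, H2; auto. Qed.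

Lemma upd_eq S x v : upd S x v x = Some v.
Proof. unfold upd; rewrite Nat.eqb_refl; reflexivity. Qed.

Lemma upd_neq S x y v : x <> y -> upd S x v y = S y.
Proof. unfold upd; intros; destruct (Nat.eqb_spec y x); congruence. Qed.

Lemma tupd_eq G x t : tupd G x t x = Some t.
Proof. unfold tupd; rewrite Nat.eqb_refl; reflexivity. Qed.

Lemma tupd_neq G x y t : x <> y -> tupd G x t y = G y.
Proof. unfold tupd; intros; destruct (Nat.eqb_spec y x); congruence. Qed.

Lemma agree_off_upd y S0 S x v :
  agree_off y S0 S -> agree_off y (upd S0 x v) (upd S x v).
Proof. unfold agree_off, upd; intros H z Hz; destruct (Nat.eqb z x); auto. Qed.

Lemma agree_off_upd_self y S v : agree_off y (upd S y v) S.
Proof. intros x Hx; apply upd_neq; auto. Qed.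

Lemma agree_off_tupd y G0 G x t :
  agree_off y G0 G -> agree_off y (tupd G0 x t) (tupd G x t).
Proof. unfold agree_off, tupd; intros H z Hz; destruct (Nat.eqb z x); auto. Qed.

Lemma eval_agree_off y S0 S e :
  (max_var_e e < y)%nat -> agree_off y S0 S -> eval S0 e = eval S e.
Proof.
  intros Hm Ha; induction e; simpl in *; try reflexivity.
  - apply Ha; lia.
  - rewrite IHe by lia; reflexivity.
  - rewrite IHe1, IHe2 by lia; reflexivity.
  - apply IHe; lia.
Qed.

Lemma typ_e_agree_off y G0 G l e t :
  agree_off y G0 G -> (max_var_e e < y)%nat -> typ_e G l e t -> typ_e G0 l e t.
Proof.
  intros Ha Hm Ht; induction Ht; simpl in Hm;
    first [ constructor; rewrite Ha by lia; assumption
          | (eapply T_Arith + eapply T_Cmp + eapply T_Logic + econstructor);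
            first [ apply IHHt; lia | apply IHHt1; lia | apply IHHt2; lia | assumption ] ].
Qed.

(** * Simulation of runs *)

Definition with_counter (y : var) (k : Z) (S0 S : store) : Prop :=
  agree_off y S0 S /\ S0 y = Some (VInt k).

Lemma with_counter_upd y k S0 S x v :
  x <> y -> with_counter y k S0 S -> with_counter y k (upd S0 x v) (upd S x v).
Proof.
  intros Hx [Ha Hy]; split; [now apply agree_off_upd|now rewrite upd_neq by auto].
Qed.

Lemma execs_app S l1 S1 c1 l2 S2 c2 :
  execs S l1 S1 c1 -> execs S1 l2 S2 c2 -> execs S (l1 ++ l2) S2 (c1 + c2).
Proof.
  intros H; revert l2 S2 c2; induction H; intros; simpl; auto.
  rewrite <- Nat.add_assoc; econstructor; eauto.
Qed.

Definition simulates (y : var) (k : nat) (R : store -> store -> nat -> Prop)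
    (S S' : store) : Prop :=
  forall z S0, with_counter y z S0 S ->
  exists S0' c, R S0 S0' c /\ with_counter y (z * pow2 k) S0' S'.

Lemma simulates_nil y S : simulates y 0 (fun A => execs A []) S S.
Proof. intros z S0 Hw; exists S0, 0%nat; rewrite mul_pow2_0; split; [constructor|exact Hw]. Qed.

Lemma simulates_cons y a b s ss S S1 S2 :
  simulates y a (fun A => exec A s) S S1 -> simulates y b (fun A => execs A ss) S1 S2 ->
  simulates y (a + b) (fun A => execs A (s :: ss)) S S2.
Proof.
  intros H1 H2 z S0 Hw.
  destruct (H1 z S0 Hw) as (S3 & c1 & He1 & Hw1).
  destruct (H2 _ S3 Hw1) as (S4 & c2 & He2 & Hw2).
  rewrite mul_pow2_add in Hw2.
  exists S4, (c1 + c2)%nat; split; [econstructor; eassumption|exact Hw2].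
Qed.

Lemma simulates_app y a b l1 l2 S S1 S2 :
  simulates y a (fun A => execs A l1) S S1 -> simulates y b (fun A => execs A l2) S1 S2 ->
  simulates y (a + b) (fun A => execs A (l1 ++ l2)) S S2.
Proof.
  intros H1 H2 z S0 Hw.
  destruct (H1 z S0 Hw) as (S3 & c1 & He1 & Hw1).
  destruct (H2 _ S3 Hw1) as (S4 & c2 & He2 & Hw2).
  rewrite mul_pow2_add in Hw2.
  exists S4, (c1 + c2)%nat; split; [eapply execs_app; eassumption|exact Hw2].
Qed.

Lemma simulates_double y S : simulates y 1 (fun A => exec A (double y)) S S.
Proof.
  intros z S0 [Ha Hy].
  eexists (upd S0 y (VInt (z + z))), _; split.
  - constructor; [congruence|simpl; now rewrite Hy].
  - split; [exact (agree_off_trans _ _ _ _ (agree_off_upd_self _ _ _) Ha)|].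
    rewrite upd_eq; cbn; do 2 f_equal; lia.
Qed.

Lemma simulates_doubles y k S : simulates y k (fun A => execs A (doubles y k)) S S.
Proof.
  induction k as [|k IH]; [apply simulates_nil|].
  exact (simulates_cons y 1 k _ _ _ _ _ (simulates_double y S) IH).
Qed.

Lemma simulates_decl y t x S :
  x <> y -> simulates y 0 (fun A => exec A (SDecl t x)) S (upd S x (default_val t)).
Proof.
  intros Hx z S0 Hw; rewrite mul_pow2_0.
  eexists _, _; split; [constructor|exact (with_counter_upd _ _ _ _ _ _ Hx Hw)].
Qed.

Lemma simulates_assign y x e v S :
  (Nat.max x (max_var_e e) < y)%nat -> S x <> None -> eval S e = Some v ->
  simulates y 0 (fun A => exec A (SAssign x e)) S (upd S x v).
Proof.
  intros Hm Hdef Hv z S0 Hw; rewrite mul_pow2_0.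
  eexists _, _; split; [|exact (with_counter_upd y z S0 S x v ltac:(lia) Hw)].
  constructor; [now rewrite (proj1 Hw) by lia|].
  now rewrite (eval_agree_off y S0 S) by (lia || apply Hw).
Qed.

Lemma simulates_block y k ss S S' :
  simulates y k (fun A => execs A ss) S S' ->
  simulates y k (fun A => exec A (SBlock ss)) S S'.
Proof.
  intros H z S0 Hw; destruct (H z S0 Hw) as (S1 & c & He & Hw1).
  exists S1, (1 + c)%nat; split; [constructor; exact He|exact Hw1].
Qed.

Lemma simulates_if y k e b s1 s2 S S' :
  (max_var_e e < y)%nat -> eval S e = Some (VBool b) ->
  simulates y k (fun A => exec A (if b then s1 else s2)) S S' ->
  simulates y k (fun A => exec A (SIf e s1 s2)) S S'.
Proof.
  intros Hm Hb H z S0 Hw; destruct (H z S0 Hw) as (S1 & c & He & Hw1).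
  rewrite <- (eval_agree_off y S0 S e Hm (proj1 Hw)) in Hb.
  eexists S1, _; split; [|exact Hw1].
  destruct b; [apply E_IfT|apply E_IfF]; eassumption.
Qed.

Lemma simulates_for y k x e s i S S' :
  (max_var_e e < y)%nat -> eval S (EUn OSize e) = Some (VInt i) ->
  simulates y k (fun A => loop A x s 0 i) S S' ->
  simulates y k (fun A => exec A (SFor x e s)) S S'.
Proof.
  intros Hm Hi H z S0 Hw; destruct (H z S0 Hw) as (S1 & c & He & Hw1).
  rewrite <- (eval_agree_off y S0 S (EUn OSize e) Hm (proj1 Hw)) in Hi.
  eexists S1, _; split; [econstructor; eassumption|exact Hw1].
Qed.

Lemma simulates_loop_done y x s j i S :
  (i <= j)%Z -> simulates y 0 (fun A => loop A x s j i) S S.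
Proof.
  intros Hij z S0 Hw; exists S0, 0%nat; rewrite mul_pow2_0.
  split; [constructor; exact Hij|exact Hw].
Qed.

Lemma simulates_loop_step y a b x s j i S S1 S2 :
  (j < i)%Z -> x <> y ->
  simulates y a (fun A => exec A s) (upd S x (VInt j)) S1 ->
  simulates y b (fun A => loop A x s (j + 1) i) S1 S2 ->
  simulates y (a + b) (fun A => loop A x s j i) S S2.
Proof.
  intros Hij Hx H1 H2 z S0 Hw.
  destruct (H1 z _ (with_counter_upd _ _ _ _ _ (VInt j) Hx Hw)) as (S3 & c1 & He1 & Hw1).
  destruct (H2 _ S3 Hw1) as (S4 & c2 & He2 & Hw2).
  rewrite mul_pow2_add in Hw2.
  exists S4, (c1 + c2)%nat; split; [econstructor; eassumption|exact Hw2].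
Qed.

Scheme exec_mut := Induction for exec Sort Prop
with execs_mut := Induction for execs Sort Prop
with loop_mut := Induction for loop Sort Prop.
Combined Scheme exec_execs_loop_mut from exec_mut, execs_mut, loop_mut.

Lemma simulates_instrument y :
  (forall S s S' c, exec S s S' c -> (max_var_s s < y)%nat ->
     simulates y c (fun A => execs A (instrument y s)) S S') /\
  (forall S ss S' c, execs S ss S' c -> (max_var_list ss < y)%nat ->
     simulates y c (fun A => execs A (instrument_list y ss)) S S') /\
  (forall S x s j i S' c, loop S x s j i S' c -> (max_var_s s < y)%nat -> x <> y ->
     simulates y c (fun A => loop A x (SBlock (instrument y s)) j i) S S').
Proof.
  apply exec_execs_loop_mut; cbn [max_var_s instrument].
  - intros S t x Hx.
    exact (simulates_cons y 0 1 _ _ _ _ _ (simulates_decl y t x S ltac:(lia))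
             (simulates_doubles y 1 _)).
  - intros S x e v Hdef Hv Hm.
    exact (simulates_cons y 0 _ _ _ _ _ _ (simulates_assign y x e v S Hm Hdef Hv)
             (simulates_doubles y _ _)).
  - intros S ss S' c _ IH Hm.
    replace (1 + c)%nat with (c + 1)%nat by lia.
    exact (simulates_cons y _ _ _ _ _ _ _ (simulates_block y _ _ _ _ (IH Hm))
             (simulates_doubles y 1 _)).
  - intros S e s1 s2 S' c He _ IH Hm.
    replace (cost_e e + c)%nat with (c + cost_e e + 0)%nat by lia.
    eapply simulates_cons; [|apply simulates_nil].
    apply (simulates_if y _ e true); [lia|exact He|].
    apply simulates_block; eapply simulates_app; [apply IH; lia|apply simulates_doubles].
  - intros S e s1 s2 S' c He _ IH Hm.
    replace (cost_e e + c)%nat with (c + cost_e e + 0)%nat by lia.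
    eapply simulates_cons; [|apply simulates_nil].
    apply (simulates_if y _ e false); [lia|exact He|].
    apply simulates_block; eapply simulates_app; [apply IH; lia|apply simulates_doubles].
  - intros S x e s i S' c Hi _ IH Hm.
    apply (simulates_app y _ c _ _ _ S); [apply simulates_doubles|].
    rewrite <- (Nat.add_0_r c); eapply simulates_cons; [|apply simulates_nil].
    apply (simulates_for y _ x e _ i); [simpl; lia|exact Hi|apply IH; lia].
  - intros S _; apply simulates_nil.
  - intros S s ss S1 S2 c1 c2 _ IH1 _ IH2 Hm.
    unfold max_var_list in Hm; simpl in Hm.
    eapply simulates_app; [apply IH1; lia|apply IH2; unfold max_var_list; lia].
  - intros S x s j i Hij _ _; apply simulates_loop_done; exact Hij.
  - intros S x s j i S1 S2 c1 c2 Hij _ IH1 _ IH2 Hm Hx.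
    eapply simulates_loop_step; [exact Hij|exact Hx|apply simulates_block, IH1, Hm|].
    apply IH2; assumption.
Qed.

(** * Typing of the instrumentation *)

Definition typed_with_counter (y : var) (G0 G : tenv) : Prop :=
  agree_off y G0 G /\ G0 y = Some TInt.

Lemma typed_with_counter_tupd y G0 G x t :
  x <> y -> typed_with_counter y G0 G -> typed_with_counter y (tupd G0 x t) (tupd G x t).
Proof.
  intros Hx [Ha Hy]; split; [now apply agree_off_tupd|now rewrite tupd_neq by auto].
Qed.

Lemma typ_ss_app G l l1 G1 l2 G2 :
  typ_ss G l l1 G1 -> typ_ss G1 l l2 G2 -> typ_ss G l (l1 ++ l2) G2.
Proof. induction 1; simpl; intros; auto; econstructor; eauto. Qed.

Lemma typ_doubles y G l k : G y = Some TInt -> typ_ss G l (doubles y k) G.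
Proof.
  intros Hy; induction k as [|k IH]; [constructor|econstructor; [|exact IH]].
  eapply TS_Assign with (tx := TInt) (t := TInt);
    [exact Hy|intros [_ ?]; discriminate| |reflexivity].
  apply (T_Arith _ _ _ _ _ TInt TInt); try constructor; auto.
Qed.

Scheme typ_s_mut := Induction for typ_s Sort Prop
with typ_ss_mut := Induction for typ_ss Sort Prop.
Combined Scheme typ_s_ss_mut from typ_s_mut, typ_ss_mut.

Lemma typ_instrument y :
  (forall G l s G', typ_s G l s G' -> (max_var_s s < y)%nat ->
     forall G0, typed_with_counter y G0 G ->
     exists G0', typ_ss G0 l (instrument y s) G0' /\ typed_with_counter y G0' G') /\
  (forall G l ss G', typ_ss G l ss G' -> (max_var_list ss < y)%nat ->
     forall G0, typed_with_counter y G0 G ->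
     exists G0', typ_ss G0 l (instrument_list y ss) G0' /\ typed_with_counter y G0' G').
Proof.
  apply typ_s_ss_mut; cbn [max_var_s instrument].
  - intros G l t x Hx Hl Hm G0 [Ha Hy].
    exists (tupd G0 x t); split; [|apply typed_with_counter_tupd; [lia|split; assumption]].
    econstructor; [constructor; [rewrite Ha by lia; exact Hx|exact Hl]|].
    apply typ_doubles; rewrite tupd_neq by lia; exact Hy.
  - intros G l x e tx t Hx Hl He Hc Hm G0 Hw.
    exists G0; split; [|exact Hw].
    econstructor; [|apply typ_doubles, Hw].
    apply TS_Assign with (tx := tx) (t := t);
      [rewrite (proj1 Hw) by lia; exact Hx|exact Hl| |exact Hc].
    apply (typ_e_agree_off y G0 G); [apply Hw|lia|exact He].
  - intros G l ss G' _ IH Hm G0 Hw.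
    destruct (IH Hm G0 Hw) as (G1 & Ht & _).
    exists G0; split; [econstructor; [econstructor; exact Ht|apply typ_doubles, Hw]|exact Hw].
  - intros G l e s1 s2 G1 G2 He _ IH1 _ IH2 Hm G0 Hw.
    destruct (IH1 ltac:(lia) G0 Hw) as (K1 & Ht1 & Hw1).
    destruct (IH2 ltac:(lia) G0 Hw) as (K2 & Ht2 & Hw2).
    exists G0; split; [|exact Hw].
    econstructor; [|constructor].
    econstructor; [apply (typ_e_agree_off y G0 G); [apply Hw|lia|exact He]| |];
      econstructor; eapply typ_ss_app;
      [exact Ht1|apply typ_doubles, Hw1|exact Ht2|apply typ_doubles, Hw2].
  - intros G l x e s G' He Hx _ IH Hm G0 Hw.
    destruct (IH ltac:(lia) _ (typed_with_counter_tupd y G0 G x TIint ltac:(lia) Hw))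
      as (G1 & Ht & _).
    exists G0; split; [|exact Hw].
    eapply typ_ss_app; [apply typ_doubles, Hw|].
    econstructor; [|constructor].
    econstructor; [| |econstructor; exact Ht].
    + apply (typ_e_agree_off y G0 G); [apply Hw|simpl; lia|exact He].
    + rewrite (proj1 Hw) by lia; exact Hx.
  - intros G l _ G0 Hw; exists G0; split; [constructor|exact Hw].
  - intros G l s ss G1 G2 _ IH1 _ IH2 Hm G0 Hw.
    unfold max_var_list in Hm; simpl in Hm.
    destruct (IH1 ltac:(lia) G0 Hw) as (H1 & Ht1 & Hw1).
    destruct (IH2 ltac:(unfold max_var_list; lia) H1 Hw1) as (H2 & Ht2 & Hw2).
    exists H2; split; [eapply typ_ss_app; eassumption|exact Hw2].
Qed.

Definition max_var_prog (p : prog) : nat :=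
  Nat.max (list_max (params p)) (max_var_list (body p)).

Definition counter_prog (p : prog) : prog :=
  let y := S (max_var_prog p) in
  Prog (params p)
    (SDecl TInt y :: SAssign y (ENum 1) :: instrument_list y (body p) ++ doubles y (cost_e (ret p)))
    (EVar y).

Lemma init_tenv_fresh xs y G :
  (list_max xs < y)%nat -> fold_left (fun G x => tupd G x TInt) xs G y = G y.
Proof.
  revert G; induction xs as [|x xs IH]; simpl; intros G Hm; [reflexivity|].
  rewrite IH by lia; apply tupd_neq; lia.
Qed.

Lemma counter_prog_well_typed p : well_typed p -> well_typed (counter_prog p).
Proof.
  intros (G' & t & Hbody & _).
  set (y := S (max_var_prog p)).
  set (G0 := tupd (init_tenv (params p)) y TInt).
  assert (Hfresh : init_tenv (params p) y = None).
  { unfold init_tenv; rewrite init_tenv_fresh; [reflexivity|unfold y, max_var_prog; lia]. }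
  assert (Hw : typed_with_counter y G0 (init_tenv (params p))).
  { split; [intros x Hx; apply tupd_neq; auto|apply tupd_eq]. }
  destruct (proj2 (typ_instrument y) _ _ _ _ Hbody ltac:(unfold y, max_var_prog; lia) G0 Hw)
    as (G1 & Ht & Hw1).
  exists G1, TInt; split; [|split; [constructor; apply Hw1|reflexivity]].
  econstructor; [constructor; [exact Hfresh|intros [? _]; discriminate]|].
  econstructor.
  - apply TS_Assign with (tx := TInt) (t := TIint);
      [apply tupd_eq|intros [_ ?]; discriminate|constructor|reflexivity].
  - eapply typ_ss_app; [exact Ht|apply typ_doubles, Hw1].
Qed.

Lemma counter_prog_run p vs out c :
  run p vs out c -> exists c', run (counter_prog p) vs (pow2 c) c'.
Proof.
  intros (Hlen & S' & c1 & Hbody & _ & ->).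
  set (y := S (max_var_prog p)).
  set (S0 := init_store (params p) vs).
  set (S1 := upd (upd S0 y (VInt 0)) y (VInt 1)).
  assert (Hw : with_counter y 1 S1 S0).
  { split; [intros x Hx; unfold S1; rewrite !upd_neq by auto; reflexivity|apply upd_eq]. }
  assert (Hsim : simulates y (c1 + cost_e (ret p))
                   (fun A => execs A (instrument_list y (body p) ++ doubles y (cost_e (ret p))))
                   S0 S').
  { eapply simulates_app; [|apply simulates_doubles].
    apply (proj1 (proj2 (simulates_instrument y)) _ _ _ _ Hbody).
    unfold y, max_var_prog; lia. }
  destruct (Hsim 1%Z S1 Hw) as (S2 & c2 & He & _ & Hy).
  eexists; split; [exact Hlen|].
  exists S2; eexists; split;
    [|split; [simpl; fold y; rewrite Hy, Z.mul_1_l; reflexivity|reflexivity]].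
  econstructor; [constructor|].
  econstructor; [|exact He].
  constructor; [rewrite upd_eq; discriminate|reflexivity].
Qed.

Lemma exec_deterministic :
  (forall S s S1 c1, exec S s S1 c1 -> forall S2 c2, exec S s S2 c2 -> S1 = S2 /\ c1 = c2) /\
  (forall S ss S1 c1, execs S ss S1 c1 -> forall S2 c2, execs S ss S2 c2 -> S1 = S2 /\ c1 = c2) /\
  (forall S x s j i S1 c1, loop S x s j i S1 c1 ->
     forall S2 c2, loop S x s j i S2 c2 -> S1 = S2 /\ c1 = c2).
Proof.
  apply exec_execs_loop_mut; intros;
  match goal with H : _ |- _ => inversion H; subst end;
  repeat match goal with
    | H1 : ?a = Some ?u, H2 : ?a = Some ?v |- _ =>
        rewrite H1 in H2; injection H2 as ?; subst
    | H1 : ?a = Some ?u, H2 : ?a = Some ?v |- _ =>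
        rewrite H1 in H2; discriminate H2
    end;
  try lia; try congruence;
  repeat match goal with
    | IH : forall S2 c2, exec ?S ?s S2 c2 -> _, H : exec ?S ?s _ _ |- _ =>
        destruct (IH _ _ H); clear IH; subst
    | IH : forall S2 c2, execs ?S ?s S2 c2 -> _, H : execs ?S ?s _ _ |- _ =>
        destruct (IH _ _ H); clear IH; subst
    | IH : forall S2 c2, loop ?S ?x ?s ?j ?i S2 c2 -> _, H : loop ?S ?x ?s ?j ?i _ _ |- _ =>
        destruct (IH _ _ H); clear IH; subst
    end; auto.
Qed.

Lemma run_deterministic p vs o1 c1 o2 c2 :
  run p vs o1 c1 -> run p vs o2 c2 -> o1 = o2 /\ c1 = c2.
Proof.
  intros (_ & S1 & d1 & E1 & V1 & ->) (_ & S2 & d2 & E2 & V2 & ->).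
  destruct (proj1 (proj2 exec_deterministic) _ _ _ _ E1 _ _ E2) as [-> ->].
  rewrite V1 in V2; injection V2 as ->; auto.
Qed.

Lemma sz_pow2 c : (c <= sz (pow2 c))%nat.
Proof.
  unfold sz, sizeZ, pow2.
  assert (Hpos : (0 < 2 ^ Z.of_nat c)%Z) by (apply Z.pow_pos_nonneg; lia).
  rewrite Z.abs_eq by lia.
  assert (Z.of_nat c <= Z.log2_up (2 ^ Z.of_nat c + 1))%Z.
  { rewrite <- (Z.log2_up_pow2 (Z.of_nat c)) at 1 by lia.
    apply Z.log2_up_le_mono; lia. }
  lia.
Qed.

(* Runs are deterministic, so choosing an output of the counter program
   defines a function. *)
Lemma FPC_pow2_cost p m f : well_typed p -> computes p m f ->
  exists g, FPC m g /\ forall vs out c, run p vs out c -> g vs = pow2 c.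
Proof.
  intros Hwt [Hlen Hcomp].
  set (R := fun vs o => exists c, run (counter_prog p) vs o c).
  exists (fun vs => epsilon (inhabits 0%Z) (R vs)).
  assert (Hg : forall vs out c, run p vs out c ->
                 epsilon (inhabits 0%Z) (R vs) = pow2 c).
  { intros vs out c Hr.
    destruct (counter_prog_run p vs out c Hr) as [c1 Hr1].
    destruct (epsilon_spec (inhabits 0%Z) (R vs) (ex_intro _ _ (ex_intro _ _ Hr1)))
      as [c2 Hr2].
    exact (proj1 (run_deterministic _ _ _ _ _ _ Hr2 Hr1)). }
  split; [|exact Hg].
  exists (counter_prog p); split; [now apply counter_prog_well_typed|split; [exact Hlen|]].
  intros vs Hvs; destruct (Hcomp vs Hvs) as [c Hr].
  rewrite (Hg _ _ _ Hr); apply counter_prog_run with (out := f vs); exact Hr.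
Qed.

Theorem corollary1 (T : nat -> nat) (HT : forall n, (n <= T n)%nat)
  (Hsz : forall (m : nat) (f : list Z -> Z), FPC m f ->
     exists C n0, forall vs, length vs = m -> (n0 <= sz_vec vs)%nat ->
       (sz (f vs) <= C * T (sz_vec vs))%nat) :
  forall (m : nat) (f : list Z -> Z), FPC m f <-> FPCT T m f.
Proof.
  intros m f; split.
  - intros (p & Hwt & Hcomp).
    destruct (FPC_pow2_cost p m f Hwt Hcomp) as (g & Hg & Hgcost).
    destruct (Hsz m g Hg) as (C & n0 & Hbound).
    exists p; split; [exact Hwt|split; [exact Hcomp|]].
    exists C, n0; intros vs out c Hvs Hn Hr.
    pose proof (sz_pow2 c) as Hc.
    rewrite <- (Hgcost vs out c Hr) in Hc.
    specialize (Hbound vs Hvs Hn); lia.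
  - intros (p & Hwt & Hcomp & _); exists p; auto.
Qed.
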